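(* $W_{\max}(19,9)\in\{6,7,\dots,27\}$.
   Context: A weighing matrix of order $n$ and weight $k$ is an $n\times n$ matrix $W$ with entries in $\{1,-1,0\}$ such that $WW^T=kI_n$. Two weighing matrices $W_1,W_2$ of order $n$ and weight $k$ are unbiased if $\frac{1}{\sqrt{k}}W_1W_2^T$ is also a weighing matrix of order $n$ and weight $k$; a set is mutually unbiased if any two distinct members are unbiased. $W_{\max}(n,9)$ denotes the maximum size of a set of mutually unbiased weighing matrices of order $n$ and weight $9$. *)

From mathcomp Require Import all_boot all_order all_algebra all_field.
Set Implicit Arguments. Unset Strict Implicit. Unset Printing Implicit Defensive.
Import Order.TTheory GRing.Theory Num.Theory.
Local Open Scope ring_scope.

Definition weighing (n k : nat) (W : 'M[int]_n) : Prop :=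
  (forall i j, W i j \in [:: 1; -1; 0]) /\ W *m W^T = (k%:R)%:M.

Definition unbiased (n k : nat) (W1 W2 : 'M[int]_n) : Prop :=
  exists M : 'M[int]_n, weighing k M /\
    (sqrtC (k%:R : algC))^-1 *: map_mx (fun z : int => z%:~R : algC) (W1 *m W2^T)
      = map_mx (fun z : int => z%:~R : algC) M.

Definition MUWM (n k : nat) (s : seq 'M[int]_n) : Prop :=
  uniq s /\ (forall W, W \in s -> weighing k W) /\
  (forall W1 W2, W1 \in s -> W2 \in s -> W1 != W2 -> unbiased k W1 W2).

Definition is_Wmax (n k m : nat) : Prop :=
  (exists s : seq 'M[int]_n, MUWM k s /\ size s = m) /\
  (forall s : seq 'M[int]_n, MUWM k s -> (size s <= m)%N).

From mathcomp Require Import all_boot all_order all_algebra all_field.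
From mathcomp Require Import zify ring lra.
From Stdlib Require Import ClassicalEpsilon.
Set Implicit Arguments. Unset Strict Implicit. Unset Printing Implicit Defensive.
Import Order.TTheory GRing.Theory Num.Theory.
Local Open Scope ring_scope.

(* The upper bound is the fourth-moment (design) bound for the 19 m rows v_x of m
   mutually unbiased weighing matrices of weight 9.  Rows of the same matrix are
   orthogonal and rows of different ones have inner products in {0, +-3}, so
   sum_(x,y) <v_x, v_y>^4 = 729 * 19 m (m + 8).  Expanding the fourth power gives
   sum_(a,b,c,d) (sum_x v_xa v_xb v_xc v_xd)^2, which is at least the contribution
   of the quadruples paired as (a,a,a,a), (a,a,c,c), (a,c,a,c), (a,c,c,a); these are
   squares of the moments U_ac = sum_x v_xa^2 v_xc^2, whose diagonal and
   off-diagonal sums are 9 * 19 m and 72 * 19 m.  Cauchy-Schwarz then yields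
   945 m^2 <= 729 m (m + 8), i.e. m <= 27.  The lower bound is an explicit family
   of six matrices, checked by computation. *)

Lemma sum_sqr_ge (I : finType) (P : pred I) (f : I -> int) (t : int) :
  2 * t * \sum_(i | P i) f i - t ^+ 2 *+ #|P| <= \sum_(i | P i) f i ^+ 2.
Proof.
rewrite -subr_ge0.
have <- : \sum_(i | P i) (f i - t) ^+ 2 =
          \sum_(i | P i) f i ^+ 2 - (2 * t * \sum_(i | P i) f i - t ^+ 2 *+ #|P|).
  rewrite mulr_sumr -sumr_const -!sumrB; apply: eq_bigr => i _; ring.
by apply: sumr_ge0 => i _; exact: sqr_ge0.
Qed.

Lemma card_ord_neq (n : nat) (a : 'I_n) : #|[pred c : 'I_n | c != a]| = n.-1.
Proof. by rewrite -[in RHS](card_ord n) -(cardC1 a); apply: eq_card. Qed.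

Lemma exp4_sumr (I : finType) (g : I -> int) :
  (\sum_a g a) ^+ 4 = \sum_a \sum_b \sum_c \sum_d (g a * g b * g c * g d).
Proof.
rewrite (_ : 4 = 1 + 1 + 1 + 1)%N // !exprD !expr1 big_distrlr /= !mulr_suml.
apply: eq_bigr => a _; rewrite !mulr_suml; apply: eq_bigr => b _.
rewrite -mulrA big_distrlr /= mulr_sumr; apply: eq_bigr => c _.
by rewrite mulr_sumr; apply: eq_bigr => d _; rewrite !mulrA.
Qed.

Lemma exchange_big2 (X I : finType) (F : X -> X -> I -> int) :
  \sum_x \sum_y \sum_b F x y b = \sum_b \sum_x \sum_y F x y b.
Proof. by under eq_bigr do rewrite exchange_big; exact: exchange_big. Qed.

Lemma ler_sum_pair (I : finType) (G : I -> int) (i j : I) :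
  (forall k, 0 <= G k) -> i != j -> G i + G j <= \sum_k G k.
Proof.
move=> G_ge0 ij; rewrite (bigD1 i) //= (bigD1 j) 1?eq_sym //= addrA lerDl.
exact: sumr_ge0.
Qed.

Lemma ler_sum_single (I : finType) (G : I -> int) (i : I) :
  (forall k, 0 <= G k) -> G i <= \sum_k G k.
Proof. by move=> G_ge0; rewrite (bigD1 i) //= lerDl; exact: sumr_ge0. Qed.

Lemma sum4_ge_pairings (n : nat) (F : 'I_n -> 'I_n -> 'I_n -> 'I_n -> int) :
  (forall a b c d, 0 <= F a b c d) ->
  \sum_a (F a a a a + \sum_(c | c != a) (F a a c c + F a c a c + F a c c a))
  <= \sum_a \sum_b \sum_c \sum_d F a b c d.
Proof.
move=> F_ge0; apply: ler_sum => a _.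
have sum_ge0 b c : 0 <= \sum_d F a b c d by exact: sumr_ge0.
apply: (@le_trans _ _ ((F a a a a + \sum_(c | c != a) F a a c c)
                        + \sum_(c | c != a) (F a c a c + F a c c a))).
  by rewrite !big_split /=; lra.
rewrite [X in _ <= X](bigD1 a) //=; apply: lerD.
  apply: (@le_trans _ _ (\sum_c F a a c c)).
    by rewrite [X in _ <= X](bigD1 a).
  by apply: ler_sum => c _; exact: ler_sum_single.
apply: ler_sum => c ca.
apply: le_trans (ler_sum_pair (sum_ge0 c) ca).
by rewrite addrC; apply: lerD; apply: ler_sum_single => d; exact: F_ge0.
Qed.

Lemma exp4_ternary (z : int) : z \in [:: 1; -1; 0] -> z ^+ 4 = z ^+ 2.
Proof. by rewrite !inE => /or3P [] /eqP ->. Qed.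

Section FourthMoment.

Variables (X : finType) (n : nat) (V : X -> 'I_n -> int).

Definition cross_moment (a c : 'I_n) : int := \sum_x V x a ^+ 2 * V x c ^+ 2.

Lemma sum_dot4E :
  \sum_x \sum_y (\sum_a V x a * V y a) ^+ 4 =
  \sum_a \sum_b \sum_c \sum_d (\sum_x V x a * V x b * V x c * V x d) ^+ 2.
Proof.
under eq_bigr do under eq_bigr do rewrite exp4_sumr.
rewrite exchange_big2.
under eq_bigr do rewrite exchange_big2.
under eq_bigr do under eq_bigr do rewrite exchange_big2.
under eq_bigr do under eq_bigr do under eq_bigr do rewrite exchange_big2.
apply: eq_bigr => a _; apply: eq_bigr => b _; apply: eq_bigr => c _.
apply: eq_bigr => d _; rewrite expr2 big_distrlr /=.
by apply: eq_bigr => x _; apply: eq_bigr => y _; ring.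
Qed.

Lemma cross_moment_le_sum_dot4 :
  \sum_a cross_moment a a ^+ 2 + 3 * \sum_a \sum_(c | c != a) cross_moment a c ^+ 2
  <= \sum_x \sum_y (\sum_a V x a * V y a) ^+ 4.
Proof.
rewrite sum_dot4E; apply: le_trans (sum4_ge_pairings _); last by move=> *; exact: sqr_ge0.
have pairing a c :
  [/\ \sum_x V x a * V x a * V x c * V x c = cross_moment a c,
      \sum_x V x a * V x c * V x a * V x c = cross_moment a c
    & \sum_x V x a * V x c * V x c * V x a = cross_moment a c].
  by split; apply: eq_bigr => x _; ring.
rewrite mulr_sumr -big_split; apply: ler_sum => a _ /=.
have [-> _ _] := pairing a a; rewrite lerD2l mulr_sumr; apply: ler_sum => c _.
by have [-> -> ->] := pairing a c; lra.
Qed.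

Variable k : int.
Hypothesis V_ternary : forall x a, V x a \in [:: 1; -1; 0].
Hypothesis V_norm : forall x, \sum_a V x a ^+ 2 = k.

Lemma sum_cross_moment_diag : \sum_a cross_moment a a = k *+ #|X|.
Proof.
rewrite exchange_big -sumr_const; apply: eq_bigr => x _.
by rewrite -(V_norm x); apply: eq_bigr => a _; rewrite -exprD exp4_ternary.
Qed.

Lemma sum_cross_moment : \sum_a \sum_c cross_moment a c = k ^+ 2 *+ #|X|.
Proof.
under eq_bigr do rewrite exchange_big /=.
rewrite exchange_big -sumr_const; apply: eq_bigr => x _.
by rewrite expr2 -{1}(V_norm x) -{1}(V_norm x) big_distrlr.
Qed.

Lemma sum_cross_moment_offdiag :
  \sum_a \sum_(c | c != a) cross_moment a c = (k ^+ 2 - k) *+ #|X|.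
Proof.
rewrite mulrnBl -sum_cross_moment -sum_cross_moment_diag -sumrB.
by apply: eq_bigr => a _; rewrite [X in _ = X - _](bigD1 a) //= addrAC subrr add0r.
Qed.

End FourthMoment.

(* Cauchy-Schwarz is used with the means [9m] and [4m] of the diagonal and off-diagonal moments. *)
Lemma blocks_le27_of_sum_dot4 (m : nat) (V : 'I_m * 'I_19 -> 'I_19 -> int) :
  (forall x a, V x a \in [:: 1; -1; 0]) -> (forall x, \sum_a V x a ^+ 2 = 9) ->
  (forall x, \sum_y (\sum_a V x a * V y a) ^+ 4 = 729 * (m%:Z + 8)) -> (m <= 27)%N.
Proof.
move=> V_ternary V_norm V_dot4.
have cardX : #|{: 'I_m * 'I_19}| = (m * 19)%N by rewrite card_prod !card_ord.
have moments := cross_moment_le_sum_dot4 V.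
rewrite (eq_bigr _ (fun x _ => V_dot4 x)) sumr_const cardX in moments.
have diag := sum_cross_moment_diag V_ternary V_norm.
have offdiag := sum_cross_moment_offdiag V_ternary V_norm.
have cs_diag : 2 * (9 * m%:Z) * \sum_a cross_moment V a a - (9 * m%:Z) ^+ 2 *+ 19
                <= \sum_a cross_moment V a a ^+ 2.
  by have := sum_sqr_ge predT (fun a => cross_moment V a a) (9 * m%:Z); rewrite card_ord.
have cs_offdiag :
    \sum_(a : 'I_19) (2 * (4 * m%:Z) * \sum_(c | c != a) cross_moment V a c
                      - (4 * m%:Z) ^+ 2 *+ 18)
    <= \sum_a \sum_(c | c != a) cross_moment V a c ^+ 2.
  apply: ler_sum => a _.
  have := sum_sqr_ge [pred c | c != a] (cross_moment V a) (4 * m%:Z).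
  by rewrite card_ord_neq.
rewrite sumrB -mulr_sumr offdiag sumr_const card_ord cardX in cs_offdiag.
rewrite diag cardX in cs_diag.
move: moments cs_diag cs_offdiag; rewrite !pmulrn !mulrzz => *.
nia.
Qed.

Lemma mulmx_trmxE (R : pzRingType) (m n p : nat) (A : 'M[R]_(m, n)) (B : 'M[R]_(p, n)) i j :
  (A *m B^T) i j = \sum_a A i a * B j a.
Proof. by rewrite mxE; apply: eq_bigr => a _; rewrite mxE. Qed.

Lemma weighing_row_norm (n k : nat) (M : 'M[int]_n) i :
  weighing k M -> \sum_a M i a ^+ 2 = k%:R.
Proof.
case=> _ MMT; have := congr1 (fun N : 'M_n => N i i) MMT.
by rewrite mulmx_trmxE mxE eqxx mulr1n => <-; apply: eq_bigr => a _; rewrite expr2.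
Qed.

Lemma weighing_sum_exp4 (n k : nat) (M : 'M[int]_n) i :
  weighing k M -> \sum_j ((M *m M^T) i j) ^+ 4 = k%:R ^+ 4.
Proof.
case=> _ ->; rewrite (bigD1 i) //= big1 => [|j ji]; rewrite mxE.
  by rewrite eqxx mulr1n addr0.
by rewrite eq_sym (negbTE ji) mulr0n expr0n.
Qed.

Lemma sqrtC9 : sqrtC (9%:R : algC) = 3.
Proof. by rewrite (_ : 9%:R = (3 : algC) ^+ 2) ?sqrCK ?ler0n // -natrX. Qed.

Lemma unbiased9_mulmx_trmx (n : nat) (A B : 'M[int]_n) :
  unbiased 9 A B -> exists2 M : 'M[int]_n, weighing 9 M & A *m B^T = 3 *: M.
Proof.
case=> M [wM AB]; exists M => //; apply/matrixP => i j.
have := congr1 (fun N : 'M[algC]_n => N i j) AB; rewrite !mxE sqrtC9 => ABij.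
apply: (@intr_inj algC); rewrite rmorphM /= -ABij mulrA divff ?mul1r //.
by rewrite pnatr_eq0.
Qed.

Lemma unbiased9_sum_exp4 (n : nat) (A B : 'M[int]_n) i :
  unbiased 9 A B -> \sum_j ((A *m B^T) i j) ^+ 4 = 729.
Proof.
case/unbiased9_mulmx_trmx => M [M_ternary M_rows] ->.
under eq_bigr => j _ do rewrite mxE exprMn (exp4_ternary (M_ternary i j)).
by rewrite -mulr_sumr (weighing_row_norm i (conj M_ternary M_rows)).
Qed.

Lemma MUWM9_size_le27 (s : seq 'M[int]_19) : MUWM 9 s -> (size s <= 27)%N.
Proof.
case=> s_uniq [s_weighing s_unbiased].
pose W (p : 'I_(size s)) := nth 0 s p.
have W_in p : W p \in s by exact: mem_nth.
pose V (x : 'I_(size s) * 'I_19) a := W x.1 x.2 a.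
apply: (@blocks_le27_of_sum_dot4 _ V).
- by move=> [p r] a; case: (s_weighing _ (W_in p)) => /(_ r a).
- by move=> [p r]; exact: weighing_row_norm (s_weighing _ (W_in p)).
move=> [p r].
rewrite -(pair_big xpredT xpredT (fun q r' => (\sum_a V (p, r) a * V (q, r') a) ^+ 4)) /=.
under eq_bigr => q _ do under eq_bigr => r' _ do rewrite -mulmx_trmxE.
rewrite (bigD1 p) //= (weighing_sum_exp4 _ (s_weighing _ (W_in p))).
under eq_bigr => q qp.
  rewrite unbiased9_sum_exp4; last first.
    by apply: s_unbiased; rewrite ?W_in // /W nth_uniq // eq_sym.
  over.
rewrite sumr_const card_ord_neq pmulrn mulrzz.
have := ltn_ord p; lia.
Qed.

Section SeqCertificates.

Variable n : nat.

Definition mx_of_seqs (l : seq (seq int)) : 'M[int]_n :=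
  \matrix_(i, j) nth 0 (nth [::] l i) j.

Definition trunc_seqs (l : seq (seq int)) : seq (seq int) :=
  [seq [seq nth 0 (nth [::] l i) j | j <- iota 0 n] | i <- iota 0 n].

Definition dot_seq (u v : seq int) : int :=
  foldr (fun k acc => nth 0 u k * nth 0 v k + acc) 0 (iota 0 n).

Definition all_pairs (P : nat -> nat -> bool) : bool :=
  all (fun i => all (P i) (iota 0 n)) (iota 0 n).

Lemma all_pairsP P : all_pairs P -> forall i j : 'I_n, P i j.
Proof.
have iota_ord (i : 'I_n) : (i : nat) \in iota 0 n by rewrite mem_iota ltn_ord.
by move=> /allP P_all i j; apply: (allP (P_all _ (iota_ord i))); exact: iota_ord.
Qed.

Lemma mx_of_seqs_mul_trmx (a b : seq (seq int)) i j :
  (mx_of_seqs a *m (mx_of_seqs b)^T) i j = dot_seq (nth [::] a i) (nth [::] b j).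
Proof.
rewrite mulmx_trmxE /dot_seq -foldr_map foldrE big_map.
rewrite (_ : iota 0 n = index_iota 0 n) ?big_mkord; last by rewrite /index_iota subn0.
by apply: eq_bigr => k _; rewrite !mxE.
Qed.

Lemma mx_of_seqs_inj a b : mx_of_seqs a = mx_of_seqs b -> trunc_seqs a = trunc_seqs b.
Proof.
move=> ab; apply/eq_in_map => i; rewrite mem_iota => /andP [_ lt_in].
apply/eq_in_map => j; rewrite mem_iota => /andP [_ lt_jn].
by have := congr1 (fun M : 'M_n => M (Ordinal lt_in) (Ordinal lt_jn)) ab; rewrite !mxE.
Qed.

Definition weighing_seqs (k : nat) (a : seq (seq int)) : bool :=
  all_pairs (fun i j => (nth 0 (nth [::] a i) j \in [:: 1; -1; 0]) &&
    (dot_seq (nth [::] a i) (nth [::] a j) == if i == j then k%:R else 0)).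

Lemma weighing_seqsP k a : weighing_seqs k a -> weighing k (mx_of_seqs a).
Proof.
move/all_pairsP => a_ok; split=> [i j|]; first by rewrite mxE; case/andP: (a_ok i j).
apply/matrixP => i j; rewrite mx_of_seqs_mul_trmx mxE.
by case/andP: (a_ok i j) => _ /eqP ->; rewrite val_eqE; case: (i == j).
Qed.

Definition gram_div3 (a b : seq (seq int)) : seq (seq int) :=
  [seq [seq (dot_seq (nth [::] a i) (nth [::] b j) %/ 3)%Z | j <- iota 0 n] | i <- iota 0 n].

Definition unbiased9_seqs (a b : seq (seq int)) : bool :=
  let c := gram_div3 a b in
  weighing_seqs 9 c &&
  all_pairs (fun i j => dot_seq (nth [::] a i) (nth [::] b j) == 3 * nth 0 (nth [::] c i) j).

Lemma unbiased9_seqsP a b : unbiased9_seqs a b -> unbiased 9 (mx_of_seqs a) (mx_of_seqs b).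
Proof.
case/andP => /weighing_seqsP wM /all_pairsP ab_div3.
exists (mx_of_seqs (gram_div3 a b)); split=> //; apply/matrixP => i j.
rewrite [LHS]mxE [X in _ * X]mxE mx_of_seqs_mul_trmx (eqP (ab_div3 i j)).
rewrite [RHS]mxE [mx_of_seqs _ i j]mxE sqrtC9 rmorphM /=.
by rewrite mulrA mulVf ?mul1r ?pnatr_eq0.
Qed.

Lemma MUWM_of_seqs (ls : seq (seq (seq int))) :
  uniq (map trunc_seqs ls) -> all (weighing_seqs 9) ls ->
  all (fun a => all (fun b => (a == b) || unbiased9_seqs a b) ls) ls ->
  MUWM 9 (map mx_of_seqs ls).
Proof.
move=> ls_uniq /allP ls_weighing /allP ls_unbiased; split; last split.
- elim: ls ls_uniq {ls_weighing ls_unbiased} => //= a ls IH /andP [a_notin ls_uniq].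
  rewrite IH // andbT; apply: contra a_notin => /mapP [b b_in ab].
  by apply/mapP; exists b => //; exact: mx_of_seqs_inj.
- by move=> W /mapP [a a_in ->]; exact/weighing_seqsP/ls_weighing.
move=> W1 W2 /mapP [a a_in ->] /mapP [b b_in ->] W12.
case/orP: (allP (ls_unbiased _ a_in) _ b_in) => [/eqP ab|]; last exact: unbiased9_seqsP.
by rewrite ab eqxx in W12.
Qed.

End SeqCertificates.

Lemma ex_max_bounded (P : nat -> Prop) (b : nat) :
  (exists k, P k) -> (forall k, P k -> (k <= b)%N) ->
  exists2 k, P k & forall j, P j -> (j <= k)%N.
Proof.
move=> exP leP.
pose p k := if excluded_middle_informative (P k) then true else false.
have pP k : reflect (P k) (p k).
  by rewrite /p; case: excluded_middle_informative => Pk; constructor.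
have exp : exists k, p k by case: exP => k /pP; exists k.
case: (@ex_maxnP p b exp (fun k pk => leP k (elimT (pP k) pk))) => k /pP Pk k_max.
by exists k => // j /pP; exact: k_max.
Qed.

Definition mub19_9 : seq (seq (seq int)) :=
  [:: [:: [:: 1; 0; 0; -1; 0; -1; 1; 0; 0; -1; 1; 1; 0; -1; 1; 0; 0; 0; 0];
          [:: 1; 0; -1; 1; 0; 0; -1; 0; 1; 0; 0; 1; 0; 1; 1; 0; 0; -1; 0];
          [:: 1; 1; 0; 1; 0; 1; 0; 0; 0; 0; 0; 0; 1; -1; 0; 0; 1; 1; 1];
          [:: 0; 1; -1; 0; 1; 0; 1; 0; 0; -1; 0; 0; -1; 1; -1; 0; 1; 0; 0];
          [:: 0; 1; 0; 0; 0; -1; 0; 1; 0; 1; -1; 0; 0; -1; 0; 0; 1; -1; -1];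
          [:: 1; 0; 0; -1; 1; 0; 0; 1; 0; 1; 1; -1; 1; 1; 0; 0; 0; 0; 0];
          [:: 0; 1; 0; 0; -1; 0; 1; -1; -1; 1; 0; 0; 0; 1; 1; -1; 0; 0; 0];
          [:: 1; 0; 1; 0; -1; 0; 0; 1; -1; -1; -1; 0; 0; 1; 0; 1; 0; 0; 0];
          [:: 1; 0; -1; 0; 0; 1; 0; 0; -1; 0; 0; -1; -1; -1; 0; 0; -1; -1; 0];
          [:: 0; 0; 1; 1; 1; 0; 0; 0; -1; 1; 1; 1; -1; 0; 0; 1; 0; 0; 0];
          [:: 1; 0; 0; -1; 0; 0; 0; -1; 1; 1; -1; 0; -1; 0; 0; 1; 0; 1; 0];
          [:: 0; 1; 1; 0; 1; 0; -1; -1; 0; -1; 0; -1; 0; 0; 1; 0; 0; 0; -1];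
          [:: 1; 0; 1; 1; 0; 0; 1; 0; 1; 0; 0; 0; 0; 0; -1; -1; -1; 0; -1];
          [:: 1; -1; 0; 0; 0; -1; -1; -1; -1; 0; 0; 0; 0; 0; -1; -1; 1; 0; 0];
          [:: 0; 0; 1; 0; -1; 0; 0; 0; 1; 0; 1; -1; -1; 0; 0; 0; 1; -1; 1];
          [:: 0; 0; -1; 1; -1; -1; 0; 0; 0; 0; 1; -1; 0; 0; 0; 1; 0; 1; -1];
          [:: 0; 1; 0; -1; -1; 1; -1; 0; 0; 0; 1; 1; 0; 0; -1; 0; 0; 0; -1];
          [:: 0; 1; 0; 0; 0; -1; -1; 1; 0; 0; 0; 0; -1; 0; 0; -1; -1; 1; 1];
          [:: 0; 1; 0; 0; 0; -1; 0; -1; 0; 0; 0; 0; 1; 0; -1; 1; -1; -1; 1]];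
      [:: [:: 1; -1; 0; 0; 0; 0; 0; 0; 0; -1; 1; -1; 0; 1; -1; 1; 1; 0; 0];
          [:: 1; 0; 0; 0; 1; 0; -1; 0; 0; -1; -1; -1; 0; -1; 0; -1; 0; 0; 1];
          [:: 0; 0; 1; 1; 1; 1; 0; 0; 0; 1; 0; -1; 1; 0; 1; 1; 0; 0; 0];
          [:: 1; -1; 1; -1; 0; 1; 0; 0; 1; 0; 0; 1; 0; -1; 0; 0; 0; 0; -1];
          [:: 0; 1; 1; 0; -1; 1; 0; 1; 0; 0; 0; -1; -1; 0; -1; 0; -1; 0; 0];
          [:: 0; 1; 0; 1; 0; 0; 0; 1; 1; -1; -1; 1; 0; 0; 0; 1; 1; 0; 0];
          [:: 1; 1; 1; 0; 0; 0; -1; -1; -1; 0; 0; 1; 0; 1; 0; 0; 0; -1; 0];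
          [:: 0; 1; 0; 0; 0; 0; 1; -1; 1; 0; 0; -1; 0; 0; 0; -1; 1; -1; -1];
          [:: 0; 0; 0; 1; 1; 1; 1; 0; 0; 0; 1; 1; 0; 0; -1; -1; 0; 0; 1];
          [:: 0; 1; 0; -1; 0; 0; -1; 0; 1; 1; 1; 0; 0; 0; 0; 0; 1; 1; 1];
          [:: 0; 1; 0; -1; 1; 0; 1; -1; 0; -1; 0; 0; 0; 0; 0; 1; -1; 1; 0];
          [:: 1; 1; -1; 0; 0; 0; 0; 1; -1; 0; 1; 0; 1; -1; 0; 0; 0; 0; -1];
          [:: 1; 0; 0; 0; 0; -1; 1; 0; 0; 1; 0; 0; -1; -1; 0; 1; 0; -1; 1];
          [:: 1; 0; 1; 0; 0; -1; 1; 1; 0; 0; 0; 0; 0; 1; 1; -1; 0; 1; 0];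
          [:: 0; 0; 0; 1; 1; -1; -1; 0; 1; 0; 1; 0; -1; 0; 0; 0; -1; 0; -1];
          [:: 0; 0; 0; 0; 1; 0; 0; 0; -1; 1; -1; 0; -1; 0; -1; 0; 1; 1; -1];
          [:: 1; 0; -1; 0; 0; 0; 0; 0; 1; 1; -1; 0; 1; 1; -1; 0; -1; 0; 0];
          [:: 1; 0; -1; 1; -1; 1; 0; -1; 0; 0; 0; 0; -1; 0; 1; 0; 0; 1; 0];
          [:: 0; 0; 1; 1; -1; -1; 0; -1; 0; 0; 0; 0; 1; -1; -1; 0; 0; 1; 0]];
      [:: [:: 0; 1; 1; 0; 0; -1; 0; 0; 0; 0; 1; -1; 0; 1; 0; -1; -1; -1; 0];
          [:: 1; 1; 0; 0; 0; 0; 0; 0; -1; 0; 1; 1; -1; 0; 0; -1; 1; 1; 0];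
          [:: 0; 1; 0; 1; 0; 0; 0; 0; 1; 1; -1; 0; 0; 1; 1; 0; 0; 1; 1];
          [:: 0; 0; -1; 0; 0; 0; 1; 0; 0; -1; 1; -1; -1; 0; 1; 1; 0; 0; 1];
          [:: 0; 0; -1; 1; 0; 1; 0; -1; 1; 0; 1; 0; 0; 1; -1; 0; 0; 0; -1];
          [:: 0; 1; -1; 0; 0; -1; -1; -1; 0; -1; -1; 0; 0; 0; 0; 0; 1; -1; 0];
          [:: 1; 0; -1; 0; 1; 0; 1; 1; 0; 0; -1; -1; 0; 0; 0; -1; 0; 0; -1];
          [:: 1; 0; 1; 0; -1; 1; 1; -1; 0; 0; -1; 0; -1; 0; 0; 0; 0; -1; 0];
          [:: 1; 0; 0; 0; 0; 0; 0; 0; 1; 1; 1; 0; 1; -1; 1; 0; 1; -1; 0];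
          [:: 1; -1; -1; 0; -1; -1; -1; 0; 0; 1; 0; 0; -1; 0; 0; 0; -1; 0; 0];
          [:: 1; -1; 1; 0; 1; -1; 0; -1; 1; -1; 0; 0; 0; 0; 0; 0; 0; 1; 0];
          [:: 0; 0; 1; 1; 0; 0; -1; 1; 0; 0; 0; -1; -1; 0; 0; 1; 1; 0; -1];
          [:: 1; 1; 0; -1; -1; 0; 0; 0; 0; 0; 0; -1; 1; 0; -1; 1; 0; 1; 0];
          [:: 1; 0; 0; 0; 1; 0; 0; 1; 0; 0; 0; 1; 0; 1; -1; 1; 0; -1; 1];
          [:: 1; 0; 0; 1; 0; 1; -1; 0; -1; -1; 0; 0; 1; 0; 1; 0; -1; 0; 0];
          [:: 0; 1; 0; -1; 1; 1; -1; 0; 1; 0; 0; 0; -1; -1; 0; 0; -1; 0; 0];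
          [:: 0; 1; 0; 1; 0; -1; 1; 0; 0; 0; 0; 1; 0; -1; 0; 1; -1; 0; -1];
          [:: 0; 0; 0; 1; -1; 0; 0; 1; 1; -1; 0; 0; 0; -1; -1; -1; 0; 0; 1];
          [:: 0; 0; 0; 1; 1; 0; 0; -1; -1; 1; 0; -1; 0; -1; -1; 0; 0; 0; 1]];
      [:: [:: 0; 0; -1; 0; 1; 1; 0; 0; 0; 0; 1; -1; 0; 0; 1; 0; -1; 1; -1];
          [:: 0; 0; -1; 1; -1; -1; 1; 0; 0; 0; -1; 0; 0; 0; 0; -1; -1; 1; 0];
          [:: 0; 1; 1; 0; 1; 0; 1; 0; 0; 1; 0; 1; 1; 1; 0; 0; -1; 0; 0];
          [:: 1; -1; 0; -1; 0; 0; 0; 0; 0; 0; -1; 0; 1; 1; 0; 0; 1; 1; -1];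
          [:: 0; 0; 0; 0; 0; 0; 1; -1; 0; 1; 0; 1; -1; -1; 1; 0; 1; 0; -1];
          [:: 1; 1; -1; 0; 1; -1; 0; 1; 0; 0; 0; 0; 0; 0; 1; 0; 1; 0; 1];
          [:: 1; 0; 0; 0; 0; 0; 0; 1; 1; 0; -1; 0; -1; 0; 0; 1; -1; -1; -1];
          [:: 1; 0; 0; -1; -1; 0; 0; -1; -1; 0; 0; 0; 0; 0; 1; 1; -1; 0; 1];
          [:: 0; 1; 0; 1; -1; 1; 1; 0; 0; 0; 0; -1; 0; 1; 0; 1; 1; 0; 0];
          [:: 1; -1; 1; 1; 0; 1; 0; 0; 1; 0; 0; 0; 0; 0; 1; -1; 0; 0; 1];
          [:: 0; 1; 1; 0; -1; 0; -1; 1; -1; 0; 0; 0; 0; 0; 1; -1; 0; 0; -1];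
          [:: 1; 0; 0; 1; 0; -1; 0; -1; 0; -1; 1; 0; 1; 0; 0; 0; 0; -1; -1];
          [:: 0; 0; 1; 1; 1; 0; 0; 0; -1; -1; -1; 0; 0; -1; 0; 1; 0; 1; 0];
          [:: 0; 0; 0; 0; 1; 0; 0; -1; -1; 0; -1; -1; -1; 1; 0; -1; 0; -1; 0];
          [:: 1; 1; 0; -1; 0; 1; 1; 0; 0; -1; 0; 0; 0; -1; -1; -1; 0; 0; 0];
          [:: 1; 0; -1; 1; 0; 1; -1; 0; -1; 1; 0; 1; 0; 0; -1; 0; 0; 0; 0];
          [:: 1; 0; 1; 0; 0; -1; 0; 0; 0; 1; 1; -1; -1; 0; -1; 0; 0; 1; 0];
          [:: 0; 1; 0; 0; 0; 0; -1; -1; 1; -1; 0; 1; -1; 1; 0; 0; 0; 1; 0];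
          [:: 0; 1; 0; 0; 0; 0; -1; -1; 1; 1; -1; -1; 1; -1; 0; 0; 0; 0; 0]];
      [:: [:: 0; 0; 0; 0; -1; 1; 0; 0; -1; 0; 1; 0; 1; -1; -1; 0; -1; 0; 1];
          [:: 1; 0; 0; 0; 1; -1; 0; 0; -1; 1; 0; 0; 0; 0; -1; 0; -1; -1; -1];
          [:: 1; 1; 1; 1; 0; -1; 0; 0; 1; 0; 1; 1; 0; 0; 0; 0; 0; 0; 1];
          [:: 0; 0; -1; 1; 1; 1; 0; 0; 0; -1; 0; 1; -1; 0; 0; 1; -1; 0; 0];
          [:: 1; 1; 0; -1; 0; 1; 0; -1; 0; 0; 1; -1; -1; 1; 0; 0; 0; 0; 0];
          [:: 0; 0; 1; 0; 0; 1; 0; 1; 1; 0; 0; 0; 1; 1; -1; 1; 0; 0; -1];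
          [:: 0; 0; 0; 1; 1; 1; -1; -1; 0; 0; 0; 0; 1; 0; 0; -1; 1; -1; 0];
          [:: 0; 0; 0; 0; 0; 1; 1; 1; 1; 1; 0; 0; -1; -1; 0; -1; 0; -1; 0];
          [:: 1; 0; 1; 0; 0; 1; 0; 0; -1; 1; -1; 1; 0; 0; 1; 0; 0; 1; 0];
          [:: 0; 0; -1; 0; 0; 0; 1; 0; 0; 1; 0; 0; 1; 1; 1; 1; 0; -1; 1];
          [:: 1; 0; -1; 0; 0; 0; 1; -1; 1; 0; 0; 0; 1; -1; 0; 0; 0; 1; -1];
          [:: 0; 1; 0; -1; 1; 0; 0; 1; 0; -1; 0; 0; 1; 0; 1; -1; -1; 0; 0];
          [:: 0; 1; 0; 0; -1; 0; 1; 0; -1; -1; 0; 1; 0; 0; 0; 0; 1; -1; -1];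
          [:: 0; 0; 0; 1; 1; 0; 1; 1; -1; 0; 1; -1; 0; 0; 0; 0; 1; 1; 0];
          [:: 1; -1; 1; 0; 0; 0; 0; 0; 0; -1; 0; -1; 0; -1; 1; 1; 0; -1; 0];
          [:: 1; -1; 0; 0; 0; 0; 1; 0; 0; -1; -1; 0; 0; 1; -1; -1; 0; 0; 1];
          [:: 0; 1; 0; -1; 1; 0; 0; 0; 0; 0; -1; 0; 0; -1; -1; 1; 1; 0; 1];
          [:: 1; 1; -1; 1; -1; 0; -1; 1; 0; 0; -1; -1; 0; 0; 0; 0; 0; 0; 0];
          [:: 1; -1; -1; -1; 0; 0; -1; 1; 0; 0; 1; 1; 0; 0; 0; 0; 1; 0; 0]];
      [:: [:: 0; 0; 0; 1; 0; -1; -1; 0; -1; 0; 0; -1; 1; -1; 1; 0; 1; 0; 0];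
          [:: 0; 1; 0; 0; -1; -1; -1; 0; 1; 0; 0; 0; -1; -1; -1; 1; 0; 0; 0];
          [:: 0; 0; 1; 0; 0; 0; 1; 0; 0; 1; 1; 0; 1; 0; -1; 1; 1; 0; 1];
          [:: 0; 1; 0; 1; 0; 1; 0; 0; -1; -1; -1; 0; 0; 0; -1; 0; 0; -1; 1];
          [:: 0; 0; -1; 1; 0; 0; 0; 1; 0; 1; 1; -1; 0; 0; -1; -1; -1; 0; 0];
          [:: 0; 0; 0; 1; 0; 0; 1; 1; 0; 0; 0; 1; -1; -1; 1; 0; 0; 1; 1];
          [:: 1; 0; 0; -1; 1; -1; 0; 1; -1; -1; 0; 0; 0; 0; -1; 0; 0; 1; 0];
          [:: 1; 1; 0; -1; -1; 0; 1; 1; 0; 0; 0; -1; 0; 0; 1; 0; 0; -1; 0];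
          [:: 0; 1; 0; 0; 1; 0; -1; 0; 0; 0; 1; 0; 0; 1; 1; 1; -1; 0; 1];
          [:: 1; 1; 0; 1; -1; 0; 0; 0; 0; 0; 0; 1; 1; 1; 0; 0; 0; 1; -1];
          [:: 1; 0; 0; 1; 1; 0; 1; -1; 0; 0; 0; -1; -1; 0; 0; 1; 0; 0; -1];
          [:: 0; 1; -1; -1; 0; 1; 0; -1; -1; 1; 0; 0; 0; -1; 0; 0; 0; 1; 0];
          [:: 1; -1; 1; 0; -1; 1; -1; 0; -1; 0; 1; 0; -1; 0; 0; 0; 0; 0; 0];
          [:: 1; 0; 0; 0; 1; 1; -1; 1; 1; 1; -1; 0; 0; 0; 0; 0; 1; 0; 0];
          [:: 0; 1; 1; 0; 1; 0; 0; 0; 0; 0; 1; 1; 0; -1; 0; -1; 0; -1; -1];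
          [:: 1; -1; -1; 0; 0; 0; 0; 0; 0; 0; 0; 1; 1; -1; 0; 1; -1; -1; 0];
          [:: 0; 0; 1; 0; 0; 1; 0; 0; 1; -1; 0; -1; 1; -1; 0; 0; -1; 1; 0];
          [:: 1; 0; -1; 0; 0; 0; 0; -1; 1; -1; 1; 0; 0; 0; 0; -1; 1; 0; 1];
          [:: 1; 0; 1; 0; 0; -1; 0; -1; 0; 1; -1; 0; 0; 0; 0; -1; -1; 0; 1]]].

Lemma MUWM_mub19_9 : MUWM 9 (map (mx_of_seqs 19) mub19_9).
Proof. by apply: MUWM_of_seqs; vm_compute. Qed.

Theorem proposition6p8 :
  exists m : nat, is_Wmax 19 9 m /\ (6 <= m <= 27)%N.
Proof.
pose achieved k := exists s : seq 'M[int]_19, MUWM 9 s /\ size s = k.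
have achieved6 : achieved 6%N.
  by exists (map (mx_of_seqs 19) mub19_9); split; [exact: MUWM_mub19_9 | exact: size_map].
have achieved_le27 k : achieved k -> (k <= 27)%N.
  by case=> s [s_MUWM <-]; exact: MUWM9_size_le27.
have [m achieved_m m_max] := ex_max_bounded (ex_intro _ _ achieved6) achieved_le27.
exists m; split; first by split=> // s s_MUWM; exact: m_max (ex_intro _ s (conj s_MUWM erefl)).
by rewrite m_max // achieved_le27.
Qed.
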